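(* Let $q$ be a prime power, $m>3$, and $n=q^{2m}-1$. For an integer design distance $d\ge2$, the primitive narrow-sense bicyclic hyperbolic code $\mathscr{H}(n\times n,q^2;d)$ over $\mathbb{F}_{q^2}$ contains its Hermitian dual if and only if $d\le\delta_h$, where $$\delta_h=\begin{cases}(q^m-1)^2 & m\text{ odd},\\ q^{2m}-1-q^{m-1} & m\text{ even}.\end{cases}$$
   Context: Bicyclic codes over $\mathbb{F}_{q^2}$: linear subspaces of $\mathbb{F}_{q^2}^{n\times n}$ closed under cyclic shifts of rows and columns, identified with ideals of $\mathbb{F}_{q^2}[X,Y]/\langle X^n-1,Y^n-1\rangle$ via $c\mapsto\sum c_{i,j}X^iY^j$. Let $\alpha$ be a primitive $n$-th root of unity. The $q^2$-ary cyclotomic coset of $(x,y)$ is $\{(xq^{2k}\bmod n,yq^{2k}\bmod n):k\ge0\}$. $\mathscr{H}(n\times n,q^2;d)$ is the set of $c\in\mathbb{F}_{q^2}^{n\times n}$ with $c(\alpha^x,\alpha^y)=0$ for all $(x,y)$ in the union of the $q^2$-ary cyclotomic cosets of the elements of the designed set $Z_{des}=\{(x\bmod n,y\bmod n):1\le x,y\le n,\ xy<d\}$. The Hermitian dual of $C$ is $C^{\perp_h}=\{u\in\mathbb{F}_{q^2}^{n\times n}:\sum_{i,j}u_{i,j}^qc_{i,j}=0\ \forall c\in C\}$. *)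

From HB Require Import structures.
From mathcomp Require Import all_boot all_order all_algebra all_field.
Set Implicit Arguments. Unset Strict Implicit. Unset Printing Implicit Defensive.
Import GRing.Theory.
Local Open Scope ring_scope.

Definition prime_power (q : nat) : Prop :=
  exists p k : nat, [/\ prime p, (0 < k)%N & q = (p ^ k)%N].

Definition in_Zdes (n d x y : nat) : Prop :=
  exists x0 y0 : nat,
    [/\ (1 <= x0 <= n)%N, (1 <= y0 <= n)%N, (x0 * y0 < d)%N,
        x = (x0 %% n)%N & y = (y0 %% n)%N].

(* union of the Q-ary cyclotomic cosets of the elements of Z_des *)
Definition in_defset (Q n d x y : nat) : Prop :=
  exists x0 y0 k : nat,
    [/\ in_Zdes n d x0 y0, x = (x0 * Q ^ k %% n)%N & y = (y0 * Q ^ k %% n)%N].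

(* c(alpha^x, alpha^y) where c is viewed as sum c_{ij} X^i Y^j, coefficients
   mapped into the extension field L containing alpha via iota *)
Definition bieval (F L : fieldType) (iota : {rmorphism F -> L}) (alpha : L)
  (n : nat) (c : 'M[F]_n) (x y : nat) : L :=
  \sum_(i < n) \sum_(j < n) iota (c i j) * alpha ^+ (x * i) * alpha ^+ (y * j).

Definition in_hypcode (F L : fieldType) (iota : {rmorphism F -> L}) (alpha : L)
  (q n d : nat) (c : 'M[F]_n) : Prop :=
  forall x y : nat, in_defset (q ^ 2) n d x y -> bieval iota alpha c x y = 0.

Definition in_hdual (F : fieldType) (q n : nat) (C : 'M[F]_n -> Prop)
  (u : 'M[F]_n) : Prop :=
  forall c, C c -> \sum_(i < n) \sum_(j < n) (u i j) ^+ q * c i j = 0.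

Definition delta_h (q m : nat) : nat :=
  if odd m then ((q ^ m - 1) ^ 2)%N else (q ^ (2 * m) - 1 - q ^ (m - 1))%N.

From HB Require Import structures.
From mathcomp Require Import all_boot all_order all_algebra all_field.
From mathcomp Require Import zify.
From mathcomp.algebra_tactics Require Import ring.
Set Implicit Arguments. Unset Strict Implicit. Unset Printing Implicit Defensive.
Import GRing.Theory.

(* Write n = q^(2m) - 1 and Q = q^2.  A bicyclic code whose defining set Z is a union of
   Q-cyclotomic cosets contains its Hermitian dual iff no (X, Y) in Z has (-qX, -qY) mod n in
   Z.  Both directions use the trace codewords (Tr alpha^(g + a i + b j))_(i,j): for suitable
   (a, b) they lie in the code, resp. in its Hermitian dual, and pairing them with a matrix gives
   a combination of the conjugates alpha^(g Q^k), which are linearly independent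
   as functions of g.
   For the hyperbolic designed set, a collision reduces, once the cyclotomic shifts are cleared,
   to two points (x, y), (x', y') of the designed region with x' + q^t x = y' + q^t y = 0 mod n
   for an odd t <= m.  Comparing the coordinates with q^m shows that x y or x' y' is at least
   delta_h, and explicit collisions attain this bound. *)

Lemma dvdn_eq_of_lt_double n z : n %| z -> 0 < z -> z < 2 * n -> z = n.
Proof. by move=> /dvdnP[[|[|k]] ->]; nia. Qed.

Lemma dvdn_add_eq_subn n a b : n %| a + b -> 0 < a -> a < n -> b < n -> a = n - b.
Proof. by move=> /dvdn_eq_of_lt_double; lia. Qed.

Lemma dvdn_add_mul_swap n T S x y :
  T * S = n + 1 -> n %| x + T * y -> n %| y + S * x.
Proof.
move=> TS dvd_x; have : n %| S * (x + T * y) by apply: dvdn_mull.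
have -> : S * (x + T * y) = n * y + (y + S * x).
  by rewrite mulnDr mulnA (mulnC S T) TS; ring.
by rewrite dvdn_addr ?dvdn_mulr.
Qed.

Lemma leq_predn_sqr M x : 0 < x -> x < M -> (M - 1) * (M - 1) <= x * (M * M - 1 - M * x).
Proof.
move=> x_gt0 x_lt.
have [b ->] : exists b, M = x + b + 1 by exists (M - x - 1); lia.
have -> : (x + b + 1) * (x + b + 1) - 1 - (x + b + 1) * x = (x + b + 1) * b + x + b.
  by rewrite !mulnDr !mulnDl; lia.
have : 1 * (b * b) <= x * (b * b) by apply: leq_mul.
by rewrite !mulnDr !mulnDl; lia.
Qed.

Lemma dvdn_eqmod n u v : u = v %[mod n] -> (n %| u) = (n %| v).
Proof. by rewrite /dvdn => ->. Qed.

Lemma dvdn_add_eqmod n u v w : u = v %[mod n] -> (n %| u + w) = (n %| v + w).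
Proof. by move=> uv; apply: dvdn_eqmod; rewrite -modnDml uv modnDml. Qed.

Lemma dvdn_add_mul_eqmod n a b c x : a = b %[mod n] -> (n %| c + a * x) = (n %| c + b * x).
Proof. by move=> ab; apply: dvdn_eqmod; rewrite -modnDmr -modnMml ab modnMml modnDmr. Qed.

Lemma modn_subn1 N : 0 < N -> N = 1 %[mod N - 1].
Proof. by case: N => // N _; rewrite subn1 -addn1 addnC modnDr. Qed.

Lemma expn_mod_pred N k : 0 < N -> N ^ k = 1 %[mod N - 1].
Proof. by move=> N_gt0; rewrite -modnXm modn_subn1 // modnXm exp1n. Qed.

Lemma expn_mod_period q k t : 0 < q -> q ^ t = q ^ (t %% k) %[mod q ^ k - 1].
Proof.
move=> q_gt0; rewrite {1}(divn_eq t k) expnD [_ * k]mulnC expnM -modnMml.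
by rewrite expn_mod_pred ?expn_gt0 ?q_gt0 // modnMml mul1n.
Qed.

Lemma expn_double q m : q ^ (2 * m) = q ^ m * q ^ m.
Proof. by rewrite mul2n -addnn expnD. Qed.

Lemma leq_pow2_expn q k m : 1 < q -> k <= m -> 2 ^ k <= q ^ m.
Proof.
move=> q_gt1 k_le; apply: (@leq_trans (2 ^ m)); first by rewrite leq_exp2l.
by case: m k_le => // m _; rewrite leq_exp2r // ltnW.
Qed.

Lemma eqmod_opp_mul n q s X : 0 < n -> n %| s + q * X -> (n - X %% n) * q = s %[mod n].
Proof.
move=> n_gt0 dvd_s; apply/eqP; rewrite -(eqn_modDr (q * X)).
move: dvd_s; rewrite /dvdn => /eqP ->.
by rewrite -modnDmr -modnMmr modnDmr mulnC -mulnDr subnK ?modnMl // ltnW // ltn_pmod.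
Qed.

(** * Divisible pairs with small products *)

Section ProductBound.

(* M = q^m, T = q^t and S = q^(2m - t) for an odd t <= m; the second case of T_small is t = m,
   where m is odd and d = delta_h = (M - 1)^2. *)
Variables M T S d : nat.
Hypotheses (T_ge2 : 2 <= T) (T_le_M : T <= M) (TS_eq : T * S = M * M).
Hypothesis T_small : 2 * T <= M \/ T = M /\ d = (M - 1) * (M - 1).
Hypothesis d_lt : d + T < M * M.

Local Notation n := (M * M - 1).

Let M_ge2 : 2 <= M. Proof. exact: leq_trans T_le_M. Qed.
Let M_le_sqr : 2 * M <= M * M. Proof. exact: leq_mul. Qed.

Let M_le_S : M <= S.
Proof. by rewrite -(leq_pmul2l (_ : 0 < T)) ?TS_eq ?leq_mul2r ?T_le_M ?orbT //; lia. Qed.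

Lemma mul_lt_sqr_pred x : x < M -> T * x < n.
Proof.
move=> x_lt; have : T * x <= M * (M - 1) by apply: leq_mul; lia.
by rewrite mulnBr muln1; lia.
Qed.

Lemma d_leq_double_compl x : 2 * T <= M -> x < M -> d <= 2 * (n - T * x).
Proof.
move=> T2M x_lt.
have : T * x + T <= T * M by rewrite -mulnSr leq_mul2l x_lt orbT.
have : 2 * T * M <= M * M by rewrite leq_mul2r T2M orbT.
lia.
Qed.

Lemma product_bound_divmod x h l :
  0 < x -> x < M -> 0 < h * T + l -> h * T + l < M -> l < T ->
  d <= x * (n - h - l * S) \/ d <= (n - T * x) * (h * T + l).
Proof.
move=> x_gt0 x_lt hl_gt0 hl_lt l_lt.
case: T_small => [T2M | [TM dE]].
- have dx := d_leq_double_compl T2M x_lt.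
  have [h0 | h_gt0] := posnP h; last first.
    by right; rewrite mulnC; apply: leq_trans dx (leq_mul _ _) => //; nia.
  rewrite h0 mul0n add0n subn0 in hl_gt0 hl_lt *.
  have [l_ge2 | l_le1] := leqP 2 l.
    by right; rewrite mulnC; apply: leq_trans dx (leq_mul _ _).
  have -> : l = 1 by lia.
  have [x_ge2 | x_le1] := leqP 2 x; [left | right]; last by rewrite (_ : x = 1); lia.
  have : 2 * S <= T * S by rewrite leq_mul2r T_ge2 orbT.
  have : 2 * (n - S) <= x * (n - S) by rewrite leq_mul2r x_ge2 orbT.
  lia.
- have SM : S = M by move: TS_eq; rewrite TM; nia.
  rewrite TM SM dE in hl_lt l_lt *.
  have h0 : h = 0 by nia.
  rewrite h0 mul0n add0n subn0 in hl_gt0 hl_lt *.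
  have [l_le | x_lt_l] := leqP l x.
  + left; apply: leq_trans (leq_predn_sqr x_gt0 x_lt) _.
    by rewrite leq_mul2l; apply/orP; right; rewrite mulnC; nia.
  + right; apply: leq_trans (leq_predn_sqr hl_gt0 hl_lt) _.
    by rewrite [X in _ <= X]mulnC leq_mul2l; apply/orP; right; nia.
Qed.

Section DivisiblePairs.

Variables x y x' y' : nat.
Hypotheses (x_gt0 : 0 < x) (x_lt : x < M) (y_gt0 : 0 < y) (y_lt : y < n).
Hypotheses (x'_eq : x' = n - T * x) (y'_gt0 : 0 < y') (y'_lt : y' < n).

Lemma product_bound_small_x' : n %| y' + T * y -> x' < M -> d <= x * y \/ d <= x' * y'.
Proof.
move=> dvd_y x'_ltM; case: T_small => [T2M | [TM dE]].
  have : T * x + T <= T * M by rewrite -mulnSr leq_mul2l x_lt orbT.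
  have : 2 * T * M <= M * M by rewrite leq_mul2r T2M orbT.
  have : 4 * M <= M * M by rewrite leq_mul2r; apply/orP; right; lia.
  lia.
have := x'_eq; rewrite TM dE => x'E.
have x_eq : x = M - 1.
  have [|x_lt'] := leqP (M - 1) x; first lia.
  have : M * x.+1 <= M * (M - 1) by rewrite leq_mul2l x_lt' orbT.
  rewrite mulnS mulnBr muln1; lia.
have x'_eqM : x' = M - 1 by rewrite x'E x_eq mulnBr muln1; lia.
rewrite x_eq x'_eqM; have [y_ge | y_ltM] := leqP (M - 1) y.
  by left; rewrite leq_mul2l y_ge orbT.
right; rewrite leq_mul2l; apply/orP; right.
have My_le : M * y.+1 <= M * (M - 1) by rewrite leq_mul2l y_ltM orbT.
rewrite mulnS mulnBr muln1 in My_le.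
move: dvd_y; rewrite TM => /dvdn_add_eq_subn -> //; lia.
Qed.

Lemma product_bound_small_y' : n %| y' + T * y -> y' < M -> d <= x * y \/ d <= x' * y'.
Proof.
move=> dvd_y y'_ltM.
have y'E : y' = y' %/ T * T + y' %% T := divn_eq y' T.
set h := y' %/ T in y'E *; set l := y' %% T in y'E *.
have l_lt : l < T by rewrite ltn_mod; lia.
have hS : h + l * S <= n.
  have : l.+1 * S <= T * S by rewrite leq_mul2r l_lt orbT.
  have : h <= h * T by rewrite leq_pmulr //; lia.
  rewrite mulSn TS_eq; lia.
have {dvd_y} dvd_y' : n %| y + S * y' by apply: dvdn_add_mul_swap dvd_y; rewrite TS_eq; lia.
have dvd_sum : n %| y + h + l * S.
  have : y + S * y' = (y + h + l * S) + h * n.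
    rewrite y'E mulnDr mulnCA (mulnC S T) (mulnC S l) TS_eq mulnBr muln1.
    have : h <= h * (M * M) by rewrite leq_pmulr // muln_gt0 andbb; lia.
    lia.
  by move: dvd_y' => /[swap] ->; rewrite dvdn_addl // dvdn_mull.
move: (dvdn_eq_of_lt_double dvd_sum) => {dvd_sum dvd_y'} sum_eq.
have y_eq : y = n - h - l * S by lia.
have := product_bound_divmod x_gt0 x_lt (_ : 0 < h * T + l) (_ : h * T + l < M) l_lt.
by rewrite -y_eq -x'_eq -y'E; apply; lia.
Qed.

End DivisiblePairs.

Lemma product_bound x y x' y' :
  0 < x < n -> 0 < y < n -> 0 < x' < n -> 0 < y' < n ->
  n %| x' + T * x -> n %| y' + T * y -> d <= x * y \/ d <= x' * y'.
Proof.
have small a b : a * b < d -> a < M \/ b < M.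
  move=> ab_lt; case: (ltnP a M) => [|a_ge]; [by left | right].
  rewrite ltnNge; apply: contraTN ab_lt => b_ge; rewrite -leqNgt.
  by have := leq_mul a_ge b_ge; lia.
have bound a b a' b' : 0 < a -> a < M -> 0 < b < n -> 0 < a' < n -> 0 < b' < n ->
    n %| a' + T * a -> n %| b' + T * b -> a' * b' < d -> d <= a * b \/ d <= a' * b'.
  move=> a_gt0 a_lt /andP[b_gt0 b_lt] /andP[a'_gt0 a'_lt] /andP[b'_gt0 b'_lt] dvd_a dvd_b.
  have a'_eq := dvdn_add_eq_subn dvd_a a'_gt0 a'_lt (mul_lt_sqr_pred a_lt).
  move/small=> [a'_ltM | b'_ltM].
    exact: product_bound_small_x'.
  exact: product_bound_small_y'.
move=> x_rng y_rng x'_rng y'_rng dvd_x dvd_y.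
case/orP: (leqVgt d (x * y)) => [|xy_lt]; first by left.
case/orP: (leqVgt d (x' * y')) => [|x'y'_lt]; first by right.
have [x_gt0 _] := andP x_rng; have [y_gt0 _] := andP y_rng.
case/small: xy_lt => [x_ltM | y_ltM].
  exact: bound x y x' y' x_gt0 x_ltM y_rng x'_rng y'_rng dvd_x dvd_y x'y'_lt.
rewrite mulnC [x' * _]mulnC.
by apply: (bound y x y' x') => //; rewrite mulnC.
Qed.

End ProductBound.

Lemma delta_h_add_lt q m t : 1 < q -> 3 < m -> odd t -> t <= m ->
  delta_h q m + q ^ t < q ^ m * q ^ m.
Proof.
move=> q_gt1 m_gt3 t_odd t_le.
have M_ge16 : 16 <= q ^ m := leq_pow2_expn q_gt1 m_gt3.
have qt_le : q ^ t <= q ^ m by rewrite leq_pexp2l //; lia.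
have : 16 * q ^ m <= q ^ m * q ^ m by rewrite leq_mul2r M_ge16 orbT.
rewrite /delta_h expn_double; case: ifP => m_odd.
  by rewrite sqrnB -?mulnn; lia.
have t_lt : t < m.
  by rewrite ltn_neqAle t_le andbT; apply: contraFN m_odd => /eqP <-.
have : q ^ t <= q ^ (m - 1) by rewrite leq_pexp2l //; lia.
have : q ^ (m - 1) <= q ^ m by rewrite leq_pexp2l //; lia.
lia.
Qed.

Lemma delta_h_product_bound_le q m t x y x' y' : 1 < q -> 3 < m -> odd t -> t <= m ->
  0 < x < q ^ (2 * m) - 1 -> 0 < y < q ^ (2 * m) - 1 ->
  0 < x' < q ^ (2 * m) - 1 -> 0 < y' < q ^ (2 * m) - 1 ->
  q ^ (2 * m) - 1 %| x' + q ^ t * x -> q ^ (2 * m) - 1 %| y' + q ^ t * y ->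
  delta_h q m <= x * y \/ delta_h q m <= x' * y'.
Proof.
move=> q_gt1 m_gt3 t_odd t_le; rewrite expn_double.
have t_gt0 : 0 < t by rewrite odd_gt0.
apply: (product_bound (S := q ^ (2 * m - t))).
- by rewrite (leq_trans q_gt1) // -{1}(expn1 q) leq_pexp2l // ltnW.
- by rewrite leq_pexp2l // ltnW.
- by rewrite -expnD subnKC ?expn_double //; lia.
- have [t_lt | t_eq] := ltnP t m.
    left; apply: leq_trans (_ : q * q ^ t <= q ^ m).
      by rewrite leq_mul2r q_gt1 orbT.
    by rewrite -expnS leq_pexp2l // ltnW.
  have tm : t = m by apply/eqP; rewrite eqn_leq t_le.
  by right; rewrite /delta_h -tm t_odd mulnn.
- exact: delta_h_add_lt.
Qed.

Lemma delta_h_lt q m : 1 < q -> 3 < m -> delta_h q m < q ^ (2 * m) - 1.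
Proof.
move=> q_gt1 m_gt3.
have := delta_h_add_lt q_gt1 m_gt3 (isT : odd 1) (leq_trans (isT : 1 <= 4) m_gt3).
by rewrite expn1 -expn_double; lia.
Qed.

Lemma delta_h_product_bound q m t x y x' y' : 1 < q -> 3 < m -> odd t ->
  0 < x <= q ^ (2 * m) - 1 -> 0 < y <= q ^ (2 * m) - 1 ->
  0 < x' <= q ^ (2 * m) - 1 -> 0 < y' <= q ^ (2 * m) - 1 ->
  q ^ (2 * m) - 1 %| x' + q ^ t * x -> q ^ (2 * m) - 1 %| y' + q ^ t * y ->
  delta_h q m <= x * y \/ delta_h q m <= x' * y'.
Proof.
move=> q_gt1 m_gt3 t_odd; set n := q ^ (2 * m) - 1.
have delta_lt := delta_h_lt q_gt1 m_gt3.
have boundary a b : 0 < a <= n -> 0 < b <= n -> ~~ ((a < n) && (b < n)) ->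
    delta_h q m <= a * b.
  move=> /andP[a_gt0 _] /andP[b_gt0 _]; rewrite negb_and -!leqNgt => n_le.
  apply: ltnW (leq_trans delta_lt _).
  by case/orP: n_le => /leq_trans; apply; [apply: leq_pmulr | apply: leq_pmull].
move=> x_rng y_rng x'_rng y'_rng.
have [xy_lt | ] := boolP ((x < n) && (y < n)); last by left; apply: boundary.
have [x'y'_lt | ] := boolP ((x' < n) && (y' < n)); last by right; apply: boundary.
have strict a : 0 < a <= n -> a < n -> 0 < a < n by case/andP=> ->.
case/andP: xy_lt => /(strict _ x_rng) {}x_rng /(strict _ y_rng) {}y_rng.
case/andP: x'y'_lt => /(strict _ x'_rng) {}x'_rng /(strict _ y'_rng) {}y'_rng.
(* Since q^(2m) = 1 mod n only t mod 2m matters, and for t > m exchanging the two points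
   replaces t by 2m - t. *)
have period := expn_mod_period (2 * m) t (ltnW q_gt1).
rewrite !(dvdn_add_mul_eqmod _ _ period); set s := t %% (2 * m).
have s_odd : odd s by rewrite odd_mod ?t_odd // oddM.
have s_lt : s < 2 * m by rewrite ltn_pmod //; lia.
have [s_le | s_gt] := leqP s m; first exact: delta_h_product_bound_le.
have sS : q ^ s * q ^ (2 * m - s) = n + 1.
  by rewrite -expnD subnKC ?subnK ?expn_gt0 ?(ltnW q_gt1) // ltnW.
move=> /(dvdn_add_mul_swap sS) dvd_x /(dvdn_add_mul_swap sS) dvd_y.
have [] := delta_h_product_bound_le q_gt1 m_gt3 _ _ x'_rng y'_rng x_rng y_rng dvd_x dvd_y.
- by rewrite oddB ?(ltnW s_lt) // oddM s_odd.
- by rewrite leq_subLR mul2n -addnn leq_add2r ltnW.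
- by right.
- by left.
Qed.

(** * Collisions in the hyperbolic defining set *)

(* The obstruction to the Z-code containing its Hermitian dual, see hdual_sub_codeE. *)
Definition herm_collision (q n : nat) (Z : nat -> nat -> Prop) : Prop :=
  exists X Y s t, [/\ Z X Y, Z s t, n %| s + q * X & n %| t + q * Y].

Lemma dvdn_coset_modE n q u v w z :
  (n %| u %% n * v %% n + q * (w %% n * z %% n)) = (n %| u * v + q * (w * z)).
Proof. by apply: dvdn_eqmod; rewrite !modnMml modnDml -modnDmr modnMmr modnDmr. Qed.

Lemma in_defset_base Q n d a b k : 0 < a <= n -> 0 < b <= n -> a * b < d ->
  in_defset Q n d (a %% n * Q ^ k %% n) (b %% n * Q ^ k %% n).
Proof. by move=> a_rng b_rng ab_lt; exists (a %% n), (b %% n), k; split => //; exists a, b. Qed.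

Lemma in_defset_coset Q n d x y k :
  in_defset Q n d x y -> in_defset Q n d (x * Q ^ k %% n) (y * Q ^ k %% n).
Proof.
case=> x0 [y0 [j [Zxy0 -> ->]]]; exists x0, y0, (j + k).
by split; rewrite // modnMml -mulnA -expnD.
Qed.

Section Collision.

Variables q m d : nat.
Hypotheses (q_gt1 : 1 < q) (m_gt3 : 3 < m).

Local Notation n := (q ^ (2 * m) - 1).
Local Notation Q := (q ^ 2).

Lemma dvdn_coset_shift a s k j : n %| s * Q ^ j + q * (a * Q ^ k) ->
  n %| s + q ^ (2 * (k + (m - 1) * j)).+1 * a.
Proof.
(* Multiplying by Q^((m - 1) j) undoes the factor Q^j, as Q^m = 1 mod n. *)
move=> /(dvdn_mulr (Q ^ ((m - 1) * j))).
have eQ : Q ^ j * Q ^ ((m - 1) * j) = (q ^ (2 * m)) ^ j.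
  by rewrite -!expnM -expnD; congr (_ ^ _); nia.
have eq : q * Q ^ k * Q ^ ((m - 1) * j) = q ^ (2 * (k + (m - 1) * j)).+1.
  by rewrite -!expnM -expnS -expnD; congr (_ ^ _); lia.
rewrite mulnDl -mulnA eQ mulnCA -mulnA eq [a * _]mulnC.
have sN : s * (q ^ (2 * m)) ^ j = s %[mod n].
  by rewrite -modnMmr expn_mod_pred ?expn_gt0 ?(ltnW q_gt1) // modnMmr muln1.
by rewrite (dvdn_add_eqmod _ sN).
Qed.

Lemma herm_collision_defset_lt : herm_collision q n (in_defset Q n d) -> delta_h q m < d.
Proof.
case=> _ [_ [_ [_ [[x0 [y0 [k [[x [y [x_rng y_rng xy_lt -> ->]]] -> ->]]]]
    [x1 [y1 [j [[x' [y' [x'_rng y'_rng x'y'_lt -> ->]]] -> ->]]]]]]]].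
rewrite !dvdn_coset_modE => /dvdn_coset_shift dvd_x /dvdn_coset_shift dvd_y.
have [] := delta_h_product_bound q_gt1 m_gt3 _ x_rng y_rng x'_rng y'_rng dvd_x dvd_y.
- by rewrite /= oddM.
- by move/leq_ltn_trans; apply.
- by move/leq_ltn_trans; apply.
Qed.

Lemma herm_collision_base a b s t k :
  0 < a <= n -> 0 < b <= n -> 0 < s <= n -> 0 < t <= n -> a * b < d -> s * t < d ->
  n %| s + q * (a * Q ^ k) -> n %| t + q * (b * Q ^ k) -> herm_collision q n (in_defset Q n d).
Proof.
move=> a_rng b_rng s_rng t_rng ab_lt st_lt dvd_s dvd_t.
exists (a %% n * Q ^ k %% n), (b %% n * Q ^ k %% n).
exists (s %% n * Q ^ 0 %% n), (t %% n * Q ^ 0 %% n).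
by split; try apply: in_defset_base; rewrite // dvdn_coset_modE expn0 muln1.
Qed.

Lemma herm_collision_odd :
  odd m -> (q ^ m - 1) ^ 2 < d -> herm_collision q n (in_defset Q n d).
Proof.
move=> m_odd; rewrite -mulnn => d_gt.
have qQ : q * Q ^ m./2 = q ^ m.
  by rewrite -expnM -expnS; congr (_ ^ _); have := odd_double_half m; rewrite m_odd; lia.
have M_ge16 : 16 <= q ^ m := leq_pow2_expn q_gt1 m_gt3.
have M_sq : 16 * q ^ m <= q ^ m * q ^ m by rewrite leq_mul2r M_ge16 orbT.
have rng : 0 < q ^ m - 1 <= n by rewrite expn_double; lia.
have dvd : n %| q ^ m - 1 + q * ((q ^ m - 1) * Q ^ m./2).
  rewrite mulnCA qQ mulnBl mul1n expn_double.
  by rewrite (_ : _ - 1 + _ = q ^ m * q ^ m - 1) //; lia.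
exact: (herm_collision_base rng rng rng rng d_gt d_gt dvd dvd).
Qed.

Lemma herm_collision_even :
  ~~ odd m -> q ^ (2 * m) - 1 - q ^ (m - 1) < d -> herm_collision q n (in_defset Q n d).
Proof.
move=> m_even d_gt; set A := q ^ (m - 1) in d_gt.
have qQ : q * Q ^ (m - 2)./2 = A.
  rewrite -expnM -expnS; congr (_ ^ _); have := odd_double_half (m - 2).
  by rewrite oddB ?(negbTE m_even) //; lia.
have MA : q ^ m = A * q by rewrite -expnSr; congr (_ ^ _); lia.
have A_ge8 : 8 <= A by apply: (leq_pow2_expn (k := 3) q_gt1); lia.
have qMA : q * q ^ m * A = n + 1.
  by rewrite expn_double subnK ?muln_gt0 ?expn_gt0 ?(ltnW q_gt1) // MA; ring.
have qM_lt : q * q ^ m < n.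
  have : q * q ^ m * 8 <= q * q ^ m * A by rewrite leq_mul2l A_ge8 orbT.
  have : 0 < q * q ^ m by rewrite muln_gt0 expn_gt0 ltnW.
  lia.
have A_le : A <= q * q ^ m by rewrite MA mulnC -mulnA leq_pmulr // muln_gt0 andbb ltnW.
apply: (herm_collision_base (k := (m - 2)./2)
  (a := 1) (b := n - q * q ^ m) (s := n - A) (t := 1)).
1-6: lia.
- by rewrite mul1n qQ subnK // ltnW // (leq_ltn_trans A_le).
- apply/dvdnP; exists (A - 1); rewrite mulnCA qQ !mulnBl mul1n (mulnC A).
  have : q * q ^ m * A <= n * A by rewrite leq_mul2r ltnW ?orbT.
  lia.
Qed.

Lemma herm_collision_defsetE : herm_collision q n (in_defset Q n d) <-> delta_h q m < d.
Proof.
split; first exact: herm_collision_defset_lt.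
rewrite /delta_h; case: ifP => [m_odd | /negbT m_even].
  exact: herm_collision_odd.
exact: herm_collision_even.
Qed.

End Collision.

(** * Trace codewords and the Hermitian dual *)

Local Open Scope ring_scope.

Definition root_sum (L : fieldType) (n z : nat) : L := if (n %| z)%N then n%:R else 0.

Section PrimitiveRootSums.

Variables (L : fieldType) (n : nat) (alpha : L).
Hypothesis prim : n.-primitive_root alpha.

Lemma sum_prim_root_expr z : \sum_(i < n) alpha ^+ (z * i) = root_sum L n z.
Proof.
rewrite /root_sum; case: ifP => z_dvd.
  have az : alpha ^+ z = 1 by apply/eqP; rewrite -(prim_order_dvd prim).
  under eq_bigr => i _ do rewrite exprM az expr1n.
  by rewrite sumr_const card_ord.
have az : alpha ^+ z != 1 by rewrite -(prim_order_dvd prim) z_dvd.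
have : (alpha ^+ z - 1) * \sum_(i < n) (alpha ^+ z) ^+ i = 0.
  by rewrite -subrX1 -exprM mulnC exprM (prim_expr_order prim) expr1n subrr.
move/eqP; rewrite mulf_eq0 subr_eq0 (negbTE az) /= => /eqP sum0.
by rewrite -[RHS]sum0; apply: eq_bigr => i _; rewrite exprM.
Qed.

Lemma sum2_prim_root_expr x y a b :
  \sum_(i < n) \sum_(j < n)
     alpha ^+ (x * i) * alpha ^+ (y * j) * alpha ^+ (a * i) * alpha ^+ (b * j) =
  root_sum L n (a + x) * root_sum L n (b + y).
Proof.
rewrite -!sum_prim_root_expr mulr_suml; apply: eq_bigr => i _.
by rewrite mulr_sumr; apply: eq_bigr => j _; rewrite !mulnDl !exprD; ring.
Qed.

Lemma bieval_eqmod (F : fieldType) (iota : {rmorphism F -> L}) (c : 'M[F]_n) x1 y1 x2 y2 :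
  (x1 = x2 %[mod n])%N -> (y1 = y2 %[mod n])%N ->
  bieval iota alpha c x1 y1 = bieval iota alpha c x2 y2.
Proof.
move=> ex ey; rewrite /bieval; apply: eq_bigr => i _; apply: eq_bigr => j _.
by congr (_ * _ * _); apply/eqP; rewrite (eq_prim_root_expr prim) -modnMml;
  [rewrite ex | rewrite ey]; rewrite modnMml.
Qed.

End PrimitiveRootSums.

Lemma expr_sum_pchar (R : comNzRingType) q (I : Type) (r : seq I) (P : pred I) (f : I -> R) :
  [pchar R].-nat q -> (\sum_(i <- r | P i) f i) ^+ q = \sum_(i <- r | P i) f i ^+ q.
Proof.
move=> q_pchar; have q_gt0 : (0 < q)%N by case/andP: q_pchar.
apply: (big_morph (fun x : R => x ^+ q)) => [x y|]; first exact: exprDn_pchar.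
by rewrite expr0n; case: (q) q_gt0.
Qed.

Lemma expr_frobenius_indep (L : fieldType) (alpha : L) (m Q : nat) (V : nat -> L) :
  (1 < Q)%N -> (1 < m)%N -> (Q ^ m - 1).-primitive_root alpha ->
  (forall g, (g < Q ^ m - 1)%N -> \sum_(k < m) V k * alpha ^+ (g * Q ^ k) = 0) ->
  forall k, (k < m)%N -> V k = 0.
Proof.
move=> Q_gt1 m_gt1 prim V_sum k k_lt; set n := (Q ^ m - 1)%N in prim V_sum.
pose P : {poly L} := \sum_(k < m) V k *: 'X^(Q ^ k).
have P_root g : (g < n)%N -> root P (alpha ^+ g).
  move=> g_lt; rewrite /root /P horner_sum.
  under eq_bigr => i _ do rewrite hornerZ hornerXn -exprM.
  by rewrite V_sum.
have P_size : (size P <= n)%N.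
  apply: leq_trans (size_sum _ _ _) _; apply/bigmax_leqP => i _.
  apply: leq_trans (size_scale_leq _ _) _; rewrite size_polyXn.
  have : (Q ^ i <= Q ^ m.-1)%N by rewrite leq_pexp2l //; have := ltn_ord i; lia.
  have : (Q * Q ^ m.-1 = Q ^ m)%N by rewrite -expnS prednK //; lia.
  have : (Q <= Q ^ m.-1)%N by rewrite -{1}(expn1 Q) leq_pexp2l //; lia.
  have : (2 * Q ^ m.-1 <= Q * Q ^ m.-1)%N by rewrite leq_mul2r Q_gt1 orbT.
  rewrite /n; lia.
have P0 : P = 0.
  apply: (roots_geq_poly_eq0 (rs := [seq alpha ^+ g | g <- iota 0 n])).
  - apply/allP => z /mapP[g]; rewrite mem_iota add0n => /andP[_ g_lt] ->.
    exact: P_root.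
  - rewrite map_inj_in_uniq ?iota_uniq // => i j; rewrite !mem_iota !add0n.
    move=> /andP[_ i_lt] /andP[_ j_lt] /eqP.
    by rewrite (eq_prim_root_expr prim) !modn_small // => /eqP.
  - by rewrite size_map size_iota.
have := congr1 (fun p : {poly L} => p`_(Q ^ k)) P0.
rewrite coef0 /P coef_sumMXn (bigD1 (Ordinal k_lt)) //= big1 ?addr0 // => i.
by case/andP=> /eqP/eqP; rewrite eqn_exp2l // => /eqP i_k; rewrite -val_eqE /= i_k eqxx.
Qed.

Lemma Frobenius_fixed_image (F L : finFieldType) (iota : {rmorphism F -> L}) (w : L) :
  w ^+ #|F| = w -> exists f, iota f = w.
Proof.
move=> w_fixed; have [/existsP[f /eqP <-] | ] := boolP [exists f, iota f == w].
  by exists f.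
rewrite negb_exists => /forallP w_notin; exfalso.
pose P : {poly L} := 'X^#|F| - 'X.
have F_gt1 := card_finNzRing_gt1 F.
have P_size : size P = #|F|.+1.
  by rewrite /P size_polyDl ?size_polyXn // size_polyN size_polyX ltnS.
have P_root z : z ^+ #|F| = z -> root P z.
  by move=> z_fixed; rewrite /root /P hornerD hornerN hornerXn hornerX z_fixed subrr.
have : (size (w :: [seq iota f | f <- enum F]) < size P)%N.
  apply: max_poly_roots; first by rewrite -size_poly_eq0 P_size.
    rewrite /= P_root //=; apply/allP => _ /mapP[f _ ->]; apply: P_root.
    by rewrite -rmorphXn expf_card.
  rewrite /= map_inj_uniq ?enum_uniq ?andbT; last exact: fmorph_inj.
  by apply/mapP => -[f _ iota_f]; move: (w_notin f); rewrite iota_f eqxx.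
by rewrite P_size /= size_map -cardE ltnn.
Qed.

Definition preim_rmorph (F L : finFieldType) (iota : {rmorphism F -> L}) (w : L) : F :=
  odflt 0 [pick f | iota f == w].

Lemma preim_rmorphK (F L : finFieldType) (iota : {rmorphism F -> L}) (w : L) :
  (exists f, iota f = w) -> iota (preim_rmorph iota w) = w.
Proof.
case=> f iota_f; rewrite /preim_rmorph.
by case: pickP => [f' /eqP // | /(_ f)]; rewrite iota_f eqxx.
Qed.

Definition trace_pow (L : fieldType) (alpha : L) (m Q w : nat) : L :=
  \sum_(k < m) alpha ^+ (w * Q ^ k).

Lemma trace_pow_pchar (L : fieldType) (alpha : L) (m Q q w : nat) : [pchar L].-nat q ->
  trace_pow alpha m Q w ^+ q = trace_pow alpha m Q (w * q).
Proof.
move=> q_pchar; rewrite /trace_pow expr_sum_pchar //.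
by apply: eq_bigr => k _; rewrite -exprM mulnAC.
Qed.

Lemma trace_pow_fixed (L : fieldType) (alpha : L) (m Q w : nat) :
  (0 < m)%N -> (0 < Q)%N -> [pchar L].-nat Q -> (Q ^ m - 1).-primitive_root alpha ->
  trace_pow alpha m Q w ^+ Q = trace_pow alpha m Q w.
Proof.
move=> m_gt0 Q_gt0 Q_pchar prim; rewrite trace_pow_pchar // /trace_pow.
case: m m_gt0 prim => // m _ prim.
rewrite [LHS]big_ord_recr [RHS]big_ord_recl addrC; congr (_ + _).
  by apply: eq_bigr => k _; rewrite -mulnA -expnS.
apply/eqP; rewrite (eq_prim_root_expr prim) -mulnA -expnS expn0 muln1.
by rewrite -modnMmr modn_subn1 ?expn_gt0 ?Q_gt0 // modnMmr muln1.
Qed.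

Lemma sum_trace_pow (L : fieldType) (alpha : L) (n m Q : nat) (v : 'I_n -> 'I_n -> L)
    g a b :
  \sum_(i < n) \sum_(j < n) v i j * trace_pow alpha m Q (g + a * i + b * j) =
  \sum_(k < m) alpha ^+ (g * Q ^ k) *
    \sum_(i < n) \sum_(j < n) v i j * alpha ^+ (a * Q ^ k * i) * alpha ^+ (b * Q ^ k * j).
Proof.
rewrite /trace_pow.
under eq_bigr => i _ do under eq_bigr => j _ do rewrite mulr_sumr.
under eq_bigr => i _ do rewrite exchange_big.
rewrite exchange_big; apply: eq_bigr => k _.
rewrite mulr_sumr; apply: eq_bigr => i _; rewrite mulr_sumr; apply: eq_bigr => j _.
have -> : ((g + a * i + b * j) * Q ^ k = g * Q ^ k + a * Q ^ k * i + b * Q ^ k * j)%N.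
  by rewrite !mulnDl; lia.
by rewrite !exprD; ring.
Qed.

Section TraceCodewords.

Variables (F L : finFieldType) (iota : {rmorphism F -> L}) (alpha : L) (q m : nat).
Hypotheses (q_gt1 : (1 < q)%N) (m_gt1 : (1 < m)%N) (F_card : #|F| = (q ^ 2)%N).
Hypotheses (q_pchar : [pchar L].-nat q) (prim : (q ^ (2 * m) - 1).-primitive_root alpha).

Local Notation n := (q ^ (2 * m) - 1)%N.
Local Notation Q := (q ^ 2)%N.

Definition trace_mx g a b : 'M[F]_n :=
  \matrix_(i, j) preim_rmorph iota (trace_pow alpha m Q (g + a * i + b * j)).

Lemma iota_trace_mx g a b i j :
  iota (trace_mx g a b i j) = trace_pow alpha m Q (g + a * i + b * j).
Proof.
rewrite mxE; apply/preim_rmorphK/Frobenius_fixed_image.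
rewrite F_card trace_pow_fixed ?expn_gt0 ?pnatX ?q_pchar ?orbT -?expnM //; lia.
Qed.

Lemma bieval_trace_mx g a b x y :
  bieval iota alpha (trace_mx g a b) x y =
  \sum_(k < m) alpha ^+ (g * Q ^ k) *
    (root_sum L n (a * Q ^ k + x) * root_sum L n (b * Q ^ k + y)).
Proof.
rewrite /bieval.
under eq_bigr => i _ do under eq_bigr => j _ do rewrite iota_trace_mx -mulrA mulrC.
rewrite (sum_trace_pow alpha m Q (fun i j => alpha ^+ (x * i) * alpha ^+ (y * j))).
by apply: eq_bigr => k _; rewrite -(sum2_prim_root_expr prim).
Qed.

Lemma hdot_trace_mx_l (u : 'M[F]_n) g a b :
  iota (\sum_i \sum_j u i j ^+ q * trace_mx g a b i j) =
  \sum_(k < m) alpha ^+ (g * Q ^ k) *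
    \sum_i \sum_j iota (u i j) ^+ q * alpha ^+ (a * Q ^ k * i) * alpha ^+ (b * Q ^ k * j).
Proof.
rewrite rmorph_sum; under eq_bigr => i _ do rewrite rmorph_sum.
under eq_bigr => i _ do under eq_bigr => j _ do rewrite rmorphM rmorphXn iota_trace_mx.
exact: (sum_trace_pow alpha m Q (fun i j => iota (u i j) ^+ q)).
Qed.

Lemma hdot_trace_mx_r (c : 'M[F]_n) g a b :
  iota (\sum_i \sum_j trace_mx g a b i j ^+ q * c i j) =
  \sum_(k < m) alpha ^+ (g * q * Q ^ k) * bieval iota alpha c (a * q * Q ^ k) (b * q * Q ^ k).
Proof.
rewrite rmorph_sum; under eq_bigr => i _ do rewrite rmorph_sum.
under eq_bigr => i _ do under eq_bigr => j _ do
  rewrite rmorphM rmorphXn iota_trace_mx trace_pow_pchar // mulrC.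
have e i j : ((g + a * i + b * j) * q = g * q + a * q * i + b * q * j)%N.
  by rewrite !mulnDl; lia.
under eq_bigr => i _ do under eq_bigr => j _ do rewrite e.
exact: (sum_trace_pow alpha m Q (fun i j => iota (c i j))).
Qed.

Let n_gt0 : (0 < n)%N.
Proof. by rewrite subn_gt0 -{1}(expn0 q) ltn_exp2l //; lia. Qed.

Let Q_gt1 : (1 < Q)%N.
Proof. by rewrite (ltn_exp2l 0 2 q_gt1). Qed.

Let primQ : (Q ^ m - 1).-primitive_root alpha.
Proof. by rewrite -expnM. Qed.

Let natr_n_neq0 : n%:R != 0 :> L.
Proof.
have p_pchar : pdiv q \in [pchar L] by apply: (pnatPpi q_pchar); rewrite pi_pdiv.
have : (n + 1)%:R == 0 :> L.
  rewrite subnK ?expn_gt0 ?(ltnW q_gt1) // -(dvdn_pcharf p_pchar).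
  by rewrite dvdn_exp ?pdiv_dvd //; lia.
by rewrite natrD; apply: contraTneq => ->; rewrite add0r oner_eq0.
Qed.

Variable Z : nat -> nat -> Prop.
Hypothesis Z_coset : forall x y k, Z x y -> Z (x * Q ^ k %% n) (y * Q ^ k %% n).

Definition code_of (c : 'M[F]_n) : Prop :=
  forall x y, Z x y -> bieval iota alpha c x y = 0.

Lemma trace_mx_in_code g X Y :
  ~ herm_collision q n Z -> Z X Y -> code_of (trace_mx g (q * X) (q * Y)).
Proof.
move=> no_coll XY s t st; rewrite bieval_trace_mx; apply: big1 => k _.
rewrite /root_sum; case: ifP => dvd_s; case: ifP => dvd_t; rewrite ?mul0r ?mulr0 //.
case: no_coll; exists (X * Q ^ k %% n)%N, (Y * Q ^ k %% n)%N, s, t.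
by split; [exact: Z_coset | by [] | move: dvd_s | move: dvd_t];
  rewrite /dvdn -[in X in _ -> X]modnDmr modnMmr modnDmr mulnA addnC; apply.
Qed.

Lemma hdual_sub_code : ~ herm_collision q n Z -> forall u, in_hdual q code_of u -> code_of u.
Proof.
(* Pairing u with the trace codewords of the code gives, for every g, a combination of the
   alpha^(g Q^k) whose first coefficient is u(alpha^X, alpha^Y)^q. *)
move=> no_coll u u_hdual X Y XY.
pose V k := \sum_i \sum_j
  iota (u i j) ^+ q * alpha ^+ (q * X * Q ^ k * i) * alpha ^+ (q * Y * Q ^ k * j).
have V_sum g : (g < Q ^ m - 1)%N -> \sum_(k < m) V k * alpha ^+ (g * Q ^ k) = 0.
  move=> _; have := u_hdual _ (trace_mx_in_code g no_coll XY).
  move/(congr1 iota); rewrite rmorph0 hdot_trace_mx_l => sum0.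
  by rewrite -[RHS]sum0; apply: eq_bigr => k _; rewrite mulrC.
have V0 := expr_frobenius_indep Q_gt1 m_gt1 primQ V_sum (ltnW m_gt1).
have : bieval iota alpha u X Y ^+ q = 0.
  rewrite -[RHS]V0 /bieval /V expr_sum_pchar //; apply: eq_bigr => i _.
  rewrite expr_sum_pchar //; apply: eq_bigr => j _.
  by rewrite !exprMn -!exprM expn0 !muln1; congr (_ * _ ^+ _ * _ ^+ _); lia.
by move/eqP; rewrite expf_eq0 => /andP[_ /eqP].
Qed.

Lemma hdual_not_sub_code :
  herm_collision q n Z -> ~ (forall u, in_hdual q code_of u -> code_of u).
Proof.
move=> [X [Y [s [t [XY st dvd_s dvd_t]]]]] hdual_sub.
(* (a, b) = -(X, Y) mod n: the trace codewords for (a, b) lie in the dual but not in the code. *)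
set a := (n - X %% n)%N; set b := (n - Y %% n)%N.
have aq_eq k : (a * q * Q ^ k = s * Q ^ k %% n %[mod n])%N.
  by rewrite modn_mod -modnMml (eqmod_opp_mul n_gt0 dvd_s) modnMml.
have bq_eq k : (b * q * Q ^ k = t * Q ^ k %% n %[mod n])%N.
  by rewrite modn_mod -modnMml (eqmod_opp_mul n_gt0 dvd_t) modnMml.
have trace_hdual g : in_hdual q code_of (trace_mx g a b).
  move=> c c_code; apply: (fmorph_inj iota); rewrite rmorph0 hdot_trace_mx_r.
  apply: big1 => k _; rewrite (bieval_eqmod prim _ _ (aq_eq k) (bq_eq k)).
  by rewrite c_code ?mulr0 //; apply: Z_coset.
have V_sum g : (g < Q ^ m - 1)%N -> \sum_(k < m)
      (root_sum L n (a * Q ^ k + X) * root_sum L n (b * Q ^ k + Y)) * alpha ^+ (g * Q ^ k) = 0.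
  move=> _; rewrite -[RHS](hdual_sub _ (trace_hdual g) X Y XY) bieval_trace_mx.
  by apply: eq_bigr => k _; rewrite mulrC.
have := expr_frobenius_indep
  (V := fun k => root_sum L n (a * Q ^ k + X) * root_sum L n (b * Q ^ k + Y))
  Q_gt1 m_gt1 primQ V_sum (ltnW m_gt1).
have opp_dvd Z0 : (n %| n - Z0 %% n + Z0)%N.
  by rewrite /dvdn -modnDmr subnK ?modnn // ltnW // ltn_pmod.
rewrite /root_sum expn0 !muln1 !opp_dvd; apply/eqP.
by rewrite mulf_eq0 orbb natr_n_neq0.
Qed.

Lemma hdual_sub_codeE :
  (forall u, in_hdual q code_of u -> code_of u) <-> ~ herm_collision q n Z.
Proof.
split=> [hdual_sub coll | no_coll]; first exact: hdual_not_sub_code coll hdual_sub.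
exact: hdual_sub_code.
Qed.

End TraceCodewords.

Lemma prime_power_pchar_nat (F : finFieldType) q :
  prime_power q -> #|F| = (q ^ 2)%N -> [pchar F].-nat q.
Proof.
case=> p [k [p_prime k_gt0 ->]] F_card.
have p_pchar : p \in [pchar F].
  by apply: (card_finPcharP (n := (k * 2)%N)); rewrite // F_card -expnM.
by rewrite pnatX (pnatE _ p_prime) p_pchar.
Qed.

Theorem theorem10 (q m d : nat) (F L : finFieldType)
  (iota : {rmorphism F -> L}) (alpha : L) :
  prime_power q -> (3 < m)%N -> (2 <= d)%N -> #|F| = (q ^ 2)%N ->
  (q ^ (2 * m) - 1)%N.-primitive_root alpha ->
  let n := (q ^ (2 * m) - 1)%N in
  let C := in_hypcode iota alpha q d (n := n) in
  ((forall u : 'M[F]_n, in_hdual q C u -> C u) <-> (d <= delta_h q m)%N).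
Proof.
move=> q_pp m_gt3 _ F_card prim n C.
have q_gt1 : (1 < q)%N.
  by case: q_pp => p [k [p_prime k_gt0 ->]]; rewrite -{1}(expn0 p) ltn_exp2l ?prime_gt1.
have m_gt1 : (1 < m)%N by apply: ltn_trans m_gt3.
have q_pchar : [pchar L].-nat q.
  by rewrite (eq_pnat _ (fmorph_pchar iota)) prime_power_pchar_nat.
have crit :=
  hdual_sub_codeE iota q_gt1 m_gt1 F_card q_pchar prim (@in_defset_coset _ _ d).
have collE := herm_collision_defsetE d q_gt1 m_gt3.
split=> [/crit no_coll | d_le]; first by rewrite leqNgt; apply/negP => /collE.
by apply/crit => /collE; rewrite ltnNge d_le.
Qed.
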